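(* Let $(X,d)$ be a compact metric space and $f:X\to X$ a continuous map. Then $$\mathcal{E}(f_{\mathcal{K}})=h_{top}(f).$$
   Context: $h_{top}(f)$ is the topological entropy of $f$. For $n\in\mathbb{N}$, $d_n(x,y)=\max_{0\le i\le n-1} d(f^ix,f^iy)$. $\mathcal K(X)$ is the space of nonempty closed subsets of $X$ with the Hausdorff metric, and $f_{\mathcal K}(B)=f(B)$. For $A\subset X$ let $A^\varepsilon_n=\{x\in X: d_n(x,A)<\varepsilon\}$, and for $B,C\in\mathcal K(X)$ let $H^n(B,C)=\inf\{\varepsilon>0: B\subset C^\varepsilon_n \text{ and } C\subset B^\varepsilon_n\}$. For nonempty $\mathcal Z\subset\mathcal K(X)$, $N_{\mathcal K}(\mathcal Z,n,\varepsilon)$ is the smallest cardinality of a set $\mathcal G\subset\mathcal K(X)$ such that every $B\in\mathcal Z$ has some $C\in\mathcal G$ with $H^n(B,C)\le\varepsilon$. The entropy order is $\mathcal E(f_{\mathcal K},\mathcal Z)=\lim_{\varepsilon\to0}\limsup_{n\to\infty}\frac{\log\log N_{\mathcal K}(\mathcal Z,n,\varepsilon)}{n}$ (convention $\log 0=0$), and $\mathcal E(f_{\mathcal K}):=\mathcal E(f_{\mathcal K},\mathcal K(X))$. *)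

From Stdlib Require Import Reals List.
From Coquelicot Require Import Coquelicot.
Open Scope R_scope.

Section MetricDefs.
Context {X : Type} (d : X -> X -> R).

Definition is_metric : Prop :=
  (forall x y, 0 <= d x y) /\
  (forall x y, d x y = 0 <-> x = y) /\
  (forall x y, d x y = d y x) /\
  (forall x y z, d x z <= d x y + d y z).

Definition m_open (U : X -> Prop) : Prop :=
  forall x, U x -> exists r, 0 < r /\ forall y, d x y < r -> U y.

Definition m_closed (A : X -> Prop) : Prop := m_open (fun x => ~ A x).

Definition m_compact : Prop :=
  forall (I : Type) (U : I -> X -> Prop),
    (forall i, m_open (U i)) -> (forall x, exists i, U i x) ->
    exists l : list I, forall x, exists i, In i l /\ U i x.

Definition m_continuous (f : X -> X) : Prop :=
  forall x eps, 0 < eps -> exists delta, 0 < delta /\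
    forall y, d x y < delta -> d (f x) (f y) < eps.

Variable f : X -> X.

Fixpoint dn (n : nat) (x y : X) : R :=
  match n with
  | O => 0
  | S m => Rmax (dn m x y) (d (Nat.iter m f x) (Nat.iter m f y))
  end.

Definition spanning (n : nat) (eps : R) (G : list X) : Prop :=
  forall x, exists y, In y G /\ dn n x y <= eps.

Definition is_min_span_card (n : nat) (eps : R) (m : nat) : Prop :=
  (exists G, length G = m /\ spanning n eps G) /\
  (forall G, spanning n eps G -> (m <= length G)%nat).

(** h_top(f) = lim_{eps->0} limsup_n (1/n) log N(n,eps) (log 0 = 0 as in Stdlib's ln). *)
Definition is_htop (h : Rbar) : Prop :=
  exists N : nat -> R -> nat,
    (forall n eps, 0 < eps -> is_min_span_card n eps (N n eps)) /\
    filterlim (fun eps => LimSup_seq (fun n => ln (INR (N n eps)) / INR n))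
              (at_right 0) (Rbar_locally h).

Definition inK (B : X -> Prop) : Prop := (exists x, B x) /\ m_closed B.

Definition dn_set (n : nat) (x : X) (A : X -> Prop) : Rbar :=
  Glb_Rbar (fun r => exists a, A a /\ r = dn n x a).

Definition nbhd_n (n : nat) (eps : R) (A : X -> Prop) (x : X) : Prop :=
  Rbar_lt (dn_set n x A) eps.

Definition Hn (n : nat) (B C : X -> Prop) : Rbar :=
  Glb_Rbar (fun eps => 0 < eps /\
    (forall x, B x -> nbhd_n n eps C x) /\
    (forall x, C x -> nbhd_n n eps B x)).

Definition K_spanning (Z : (X -> Prop) -> Prop) (n : nat) (eps : R)
    (G : list (X -> Prop)) : Prop :=
  (forall C, In C G -> inK C) /\
  (forall B, Z B -> exists C, In C G /\ Rbar_le (Hn n B C) eps).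

Definition is_min_K_card (Z : (X -> Prop) -> Prop) (n : nat) (eps : R) (m : nat)
  : Prop :=
  (exists G, length G = m /\ K_spanning Z n eps G) /\
  (forall G, K_spanning Z n eps G -> (m <= length G)%nat).

Definition is_entropy_order (Z : (X -> Prop) -> Prop) (e : Rbar) : Prop :=
  exists N : nat -> R -> nat,
    (forall n eps, 0 < eps -> is_min_K_card Z n eps (N n eps)) /\
    filterlim (fun eps => LimSup_seq (fun n => ln (ln (INR (N n eps))) / INR n))
              (at_right 0) (Rbar_locally e).

Definition is_entropy_order_K (e : Rbar) : Prop := is_entropy_order inK e.

End MetricDefs.

(** For a compact metric space [X] and a continuous [f : X -> X], let [N n e]
   be the least cardinality of an (n,e)-spanning set of [X] (for the Bowen
   metric [d_n]) and [NK n e] the least cardinality of an (n,e)-spanning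
   family of the hyperspace [K(X)] for the distance [H^n].  Two counting
   estimates tie them together:
   - every nonempty subset of an (n,e)-spanning set is a closed set, and these
     subsets form an (n,e)-spanning family of [K(X)], so [1 + NK n e <= 2 ^ N n e];
   - the nonempty subsets of a maximal (n,3e)-separated set (which is itself
     (n,3e)-spanning) are pairwise too far apart to share an [H^n]-center at
     distance [e], so [2 ^ N n (3e) <= 1 + NK n e].
   After taking [log log] and dividing by [n], the second order growth rate of
   [NK] at scale [e] is squeezed between the exponential growth rates of [N] at
   scales [3e] and [e].  These rates are finite ([N n e <= N 1 (e/2) ^ n]) and
   monotone in [e], so both quantities have the same limit as [e -> 0+]. *)

From Stdlib Require Import Reals List Lra Lia Classical ClassicalEpsilon.
From Coquelicot Require Import Coquelicot.
Open Scope R_scope.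

(** ** Finite combinatorics *)

Lemma least_witness (P : nat -> Prop) :
  (exists n, P n) -> exists n, P n /\ forall k, P k -> (n <= k)%nat.
Proof.
  intros [n0 Hn0]. apply NNPP; intro Hno.
  assert (Hbelow : forall n k, (k <= n)%nat -> ~ P k).
  { induction n as [|n IH]; intros k Hk Pk.
    - apply Hno; exists k; split; auto; intros; lia.
    - destruct (Nat.eq_dec k (S n)) as [->|Hne]; [|apply (IH k); auto; lia].
      apply Hno; exists (S n); split; auto. intros j Pj.
      destruct (Compare_dec.le_lt_dec (S n) j); auto.
      exfalso; apply (IH j); auto; lia. }
  exact (Hbelow n0 n0 (le_n _) Hn0).
Qed.

(** A predicate that holds at [0] and is bounded above stops holding at some
    successor: this yields maximal objects of bounded size. *)
Lemma last_witness (P : nat -> Prop) (M : nat) :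
  P 0%nat -> (forall k, P k -> (k <= M)%nat) -> exists k, P k /\ ~ P (S k).
Proof.
  intros P0 HM. apply NNPP; intro Hno.
  assert (Hall : forall k, P k).
  { induction k; auto. apply NNPP; intro. apply Hno; eauto. }
  specialize (HM (S M) (Hall _)); lia.
Qed.

Lemma length_le_of_injective_relation {A B : Type} (Rel : A -> B -> Prop)
    (L : list A) (G : list B) :
  NoDup L -> (forall a, In a L -> exists b, In b G /\ Rel a b) ->
  (forall a a' b, In a L -> In a' L -> Rel a b -> Rel a' b -> a = a') ->
  (length L <= length G)%nat.
Proof.
  intros HN Hex Huniq. destruct L as [|a0 L0]; [simpl; lia|].
  destruct (Hex a0 (or_introl eq_refl)) as [b0 _].
  pose (Q := fun a b => In a (a0 :: L0) -> In b G /\ Rel a b).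
  pose (g := fun a => epsilon (inhabits b0) (Q a)).
  assert (Hg : forall a, In a (a0 :: L0) -> In (g a) G /\ Rel a (g a)).
  { intros a Ha. apply (epsilon_spec (inhabits b0) (Q a)); [|exact Ha].
    destruct (Hex a Ha) as [b Hb]; exists b; intros _; exact Hb. }
  rewrite <- (length_map g). apply NoDup_incl_length.
  - apply NoDup_map_NoDup_ForallPairs; auto. intros a a' Ha Ha' E.
    apply (Huniq a a' (g a)); auto.
    + apply Hg; auto.
    + rewrite E; apply Hg; auto.
  - intros b Hb. apply in_map_iff in Hb. destruct Hb as [a [<- Ha]]. apply Hg; auto.
Qed.

Lemma choose_witnesses {A T : Type} (Q : A -> T -> Prop) (L : list A) :
  exists Y, (length Y <= length L)%nat /\
    forall a, In a L -> (exists x, Q a x) -> exists y, In y Y /\ Q a y.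
Proof.
  induction L as [|a L [Y [HY H]]].
  - exists nil; split; auto. intros a [].
  - destruct (classic (exists x, Q a x)) as [[x Hx]|Hno].
    + exists (x :: Y); split; simpl; [lia|]. intros b [<-|Hb] Hex; eauto.
      destruct (H b Hb Hex) as [y [Hy Hq]]; eauto.
    + exists Y; split; simpl; [lia|]. intros b [<-|Hb] Hex; [tauto|auto].
Qed.

Fixpoint nonempty_sublists {A : Type} (l : list A) : list (list A) :=
  match l with
  | nil => nil
  | x :: l' => nonempty_sublists l' ++ (x :: nil) :: map (cons x) (nonempty_sublists l')
  end.

Lemma nonempty_sublists_length {A} (l : list A) :
  S (length (nonempty_sublists l)) = (2 ^ length l)%nat.
Proof.
  induction l; simpl; auto. rewrite length_app; simpl; rewrite length_map. lia.
Qed.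

Lemma nonempty_sublists_incl {A} (l : list A) :
  forall T, In T (nonempty_sublists l) -> forall x, In x T -> In x l.
Proof.
  induction l; simpl; [tauto|]. intros T HT x Hx. apply in_app_or in HT.
  destruct HT as [H|[H|H]].
  - right; eauto.
  - subst; simpl in Hx; tauto.
  - apply in_map_iff in H. destruct H as [T0 [<- H0]]. destruct Hx; auto. right; eauto.
Qed.

Lemma nonempty_sublists_nonempty {A} (l : list A) :
  forall T, In T (nonempty_sublists l) -> exists x, In x T.
Proof.
  induction l; simpl; [tauto|]. intros T HT. apply in_app_or in HT.
  destruct HT as [H|[H|H]]; auto.
  - subst; exists a; simpl; auto.
  - apply in_map_iff in H. destruct H as [T0 [<- _]]. exists a; simpl; auto.
Qed.

Lemma nonempty_sublists_select {A} (l : list A) (P : A -> Prop) :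
  (exists x, In x l /\ P x) ->
  exists T, In T (nonempty_sublists l) /\ forall x, In x T <-> In x l /\ P x.
Proof.
  induction l as [|a l IH]; simpl; [intros [x [[] _]]|].
  intros Hex. destruct (classic (exists x, In x l /\ P x)) as [H|H].
  - destruct (IH H) as [T [HT HTe]]. destruct (classic (P a)) as [Pa|nPa].
    + exists (a :: T); split.
      * apply in_or_app; right; right; apply in_map; auto.
      * intros x; simpl; rewrite HTe. split; [intros [<-|[]]|intros [[<-|Hx] Px]]; auto.
    + exists T; split; [apply in_or_app; auto|].
      intros x; rewrite HTe. split; [intros []; auto|intros [[<-|Hx] Px]; tauto].
  - exists (a :: nil); split; [apply in_or_app; right; left; auto|].
    intros x; simpl. split.
    + intros [<-|[]]. split; auto. destruct Hex as [y [[<-|Hy] Py]]; auto.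
      exfalso; eauto.
    + intros [[<-|Hx] Px]; auto. exfalso; eauto.
Qed.

Lemma nonempty_sublists_ext {A} (l : list A) : NoDup l ->
  forall T T', In T (nonempty_sublists l) -> In T' (nonempty_sublists l) ->
  (forall x, In x T <-> In x T') -> T = T'.
Proof.
  induction l as [|a l IH]; simpl; [tauto|]. intros HN.
  inversion HN as [|? ? Hna HN']; subst.
  assert (Hfresh : forall T, In T (nonempty_sublists l) -> ~ In a T)
    by (intros T HT Ha; apply Hna; eapply nonempty_sublists_incl; eauto).
  assert (Hshape : forall T, In T (nonempty_sublists (a :: l)) ->
     In T (nonempty_sublists l) \/
     exists T0, T = a :: T0 /\ (T0 = nil \/ In T0 (nonempty_sublists l))).
  { intros T HT. apply in_app_or in HT. destruct HT as [H|[H|H]]; auto.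
    - right; exists nil; auto.
    - apply in_map_iff in H. destruct H as [T0 [<- H0]]. right; eauto. }
  assert (Htail_fresh : forall T0, T0 = nil \/ In T0 (nonempty_sublists l) -> ~ In a T0)
    by (intros T0 [->|H]; [simpl; auto|apply Hfresh; auto]).
  intros T T' HT HT' He.
  destruct (Hshape T HT) as [H1|[T0 [-> H1]]];
    destruct (Hshape T' HT') as [H2|[T0' [-> H2]]].
  - auto.
  - exfalso; apply (Hfresh T H1); apply He; left; auto.
  - exfalso; apply (Hfresh T' H2); apply He; left; auto.
  - f_equal.
    assert (He' : forall x, In x T0 <-> In x T0').
    { pose proof (Htail_fresh _ H1). pose proof (Htail_fresh _ H2).
      intros x; split; intros Hx.
      + destruct (proj1 (He x) (or_intror Hx)) as [<-|]; tauto.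
      + destruct (proj2 (He x) (or_intror Hx)) as [<-|]; tauto. }
    destruct H1 as [->|H1]; destruct H2 as [->|H2]; auto.
    + destruct (nonempty_sublists_nonempty _ _ H2) as [x Hx]. apply He' in Hx; destruct Hx.
    + destruct (nonempty_sublists_nonempty _ _ H1) as [x Hx]. apply He' in Hx; destruct Hx.
Qed.

Lemma nonempty_sublists_NoDup {A} (l : list A) : NoDup l -> NoDup (nonempty_sublists l).
Proof.
  induction l as [|a l IH]; simpl; intros HN; [constructor|].
  inversion HN as [|? ? Hna HN']; subst.
  assert (Hfresh : forall T, In T (nonempty_sublists l) -> ~ In a T)
    by (intros T HT Ha; apply Hna; eapply nonempty_sublists_incl; eauto).
  apply NoDup_app; auto.
  - constructor.
    + intros H. apply in_map_iff in H. destruct H as [T0 [E H0]]. injection E; intros ->.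
      destruct (nonempty_sublists_nonempty _ _ H0) as [x []].
    + apply NoDup_map_NoDup_ForallPairs; auto. intros x y _ _ E; injection E; auto.
  - intros T HT [E|E].
    + subst; apply (Hfresh _ HT); simpl; auto.
    + apply in_map_iff in E. destruct E as [T0 [<- _]]. apply (Hfresh _ HT); simpl; auto.
Qed.

(** ** The Bowen metrics and spanning sets of [X] *)

Section BowenMetric.
Context {X : Type} (d : X -> X -> R) (f : X -> X).
Hypothesis Hd : is_metric d.

Lemma dist_nonneg x y : 0 <= d x y. Proof. apply Hd. Qed.
Lemma dist_sym x y : d x y = d y x. Proof. apply Hd. Qed.
Lemma dist_triangle x y z : d x z <= d x y + d y z. Proof. apply Hd. Qed.
Lemma dist_self x : d x x = 0. Proof. apply Hd; reflexivity. Qed.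
Lemma dist_eq0 x y : d x y = 0 -> x = y. Proof. apply Hd. Qed.

Lemma dn_sym n x y : dn d f n x y = dn d f n y x.
Proof. induction n; simpl; auto. rewrite IHn, dist_sym; auto. Qed.

Lemma dn_self n x : dn d f n x x = 0.
Proof. induction n; simpl; auto. rewrite IHn, dist_self. apply Rmax_left; lra. Qed.

Lemma dn_triangle n x y z : dn d f n x z <= dn d f n x y + dn d f n y z.
Proof.
  induction n; simpl; [lra|]. apply Rmax_lub.
  - eapply Rle_trans; [apply IHn|]. apply Rplus_le_compat; apply Rmax_l.
  - eapply Rle_trans; [apply (dist_triangle _ (Nat.iter n f y))|].
    apply Rplus_le_compat; apply Rmax_r.
Qed.

Lemma dist_iter_le_dn n i x y :
  (i < n)%nat -> d (Nat.iter i f x) (Nat.iter i f y) <= dn d f n x y.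
Proof.
  induction n; intros Hi; [lia|]. simpl.
  destruct (Nat.eq_dec i n) as [->|Hne]; [apply Rmax_r|].
  eapply Rle_trans; [apply IHn; lia|apply Rmax_l].
Qed.

Lemma dn_le_of_iter n x y e : 0 <= e ->
  (forall i, (i < n)%nat -> d (Nat.iter i f x) (Nat.iter i f y) <= e) ->
  dn d f n x y <= e.
Proof.
  intros He; induction n; intros H; simpl; auto.
  apply Rmax_lub; [apply IHn; intros; apply H; lia|apply H; lia].
Qed.

Definition separated (n : nat) (del : R) (E : list X) : Prop :=
  NoDup E /\ forall x y, In x E -> In y E -> x <> y -> del <= dn d f n x y.

(** A separated set cannot be longer than a spanning set at a third of the
    scale: distinct separated points have distinct spanning centers. *)
Lemma separated_length_le n del E G : 0 < del ->
  separated n del E -> spanning d f n (del / 3) G -> (length E <= length G)%nat.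
Proof.
  intros Hdel [HN Hsep] HG.
  apply (length_le_of_injective_relation (fun e g => dn d f n e g <= del / 3)); auto.
  intros a a' b Ha Ha' H1 H2. apply NNPP; intro Hne.
  specialize (Hsep a a' Ha Ha' Hne). pose proof (dn_triangle n a b a').
  rewrite (dn_sym n b a') in H. lra.
Qed.

Lemma list_closed (T : list X) : m_closed d (fun x => In x T).
Proof.
  unfold m_closed, m_open. induction T as [|a T IH]; intros x Hx.
  - exists 1; split; [lra|]; simpl; auto.
  - assert (Hxa : x <> a) by (intro; apply Hx; left; auto).
    destruct (IH x (fun H => Hx (or_intror H))) as [r [Hr H]].
    assert (Hpos : 0 < d x a).
    { destruct (Rle_lt_or_eq_dec _ _ (dist_nonneg x a)); auto.
      exfalso; apply Hxa, dist_eq0; auto. }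
    exists (Rmin (d x a) r); split; [apply Rmin_pos; auto|].
    intros y Hy [E|E].
    + subst. pose proof (Rmin_l (d x y) r); lra.
    + apply (H y); auto. eapply Rlt_le_trans; [apply Hy|apply Rmin_r].
Qed.

Lemma list_inK (T : list X) : (exists x, In x T) -> inK d (fun x => In x T).
Proof. intros H; split; auto. apply list_closed. Qed.

(** ** The distances [H^n] on the hyperspace *)

Lemma Glb_Rbar_le_elem (E : R -> Prop) x : E x -> Rbar_le (Glb_Rbar E) x.
Proof. intros Hx. apply (proj1 (Glb_Rbar_correct E)); auto. Qed.

Lemma Glb_Rbar_lt_witness (E : R -> Prop) (r : R) :
  Rbar_lt (Glb_Rbar E) r -> exists x, E x /\ x < r.
Proof.
  intros H. apply NNPP; intro Hn. apply (Rbar_lt_not_le _ _ H).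
  apply (proj2 (Glb_Rbar_correct E)). intros x Hx. simpl.
  apply Rnot_lt_le; intro; apply Hn; eauto.
Qed.

Lemma Rbar_le_of_forall_gt (l : Rbar) (e : R) :
  (forall e', e < e' -> Rbar_le l e') -> Rbar_le l e.
Proof.
  intros H. destruct l as [r| |]; simpl.
  - apply Rnot_lt_le; intro Hlt. specialize (H ((r + e) / 2) ltac:(lra)); simpl in H; lra.
  - apply (H (e + 1)); lra.
  - auto.
Qed.

Lemma Hn_le_of_partners n (B C : X -> Prop) eps : 0 < eps ->
  (forall b, B b -> exists c, C c /\ dn d f n b c <= eps) ->
  (forall c, C c -> exists b, B b /\ dn d f n c b <= eps) ->
  Rbar_le (Hn d f n B C) eps.
Proof.
  intros He H1 H2. apply Rbar_le_of_forall_gt. intros e' He'.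
  apply Glb_Rbar_le_elem. split; [lra|split].
  - intros x Hx. destruct (H1 x Hx) as [c [Hc Hxc]]. unfold nbhd_n.
    eapply Rbar_le_lt_trans; [apply Glb_Rbar_le_elem; eauto|simpl; lra].
  - intros x Hx. destruct (H2 x Hx) as [c [Hc Hxc]]. unfold nbhd_n.
    eapply Rbar_le_lt_trans; [apply Glb_Rbar_le_elem; eauto|simpl; lra].
Qed.

Lemma partners_of_Hn_le n (B C : X -> Prop) (eps e' : R) :
  Rbar_le (Hn d f n B C) eps -> eps < e' ->
  (forall b, B b -> exists c, C c /\ dn d f n b c < e') /\
  (forall c, C c -> exists b, B b /\ dn d f n c b < e').
Proof.
  intros H He.
  assert (Hlt : Rbar_lt (Hn d f n B C) e')
    by (apply Rbar_le_lt_trans with (Finite eps); [apply H|simpl; lra]).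
  destruct (Glb_Rbar_lt_witness _ _ Hlt) as [e'' [[_ [HB HC]] Hlt']].
  split.
  - intros b Hb. destruct (Glb_Rbar_lt_witness _ _ (HB b Hb)) as [r [[c [Hc ->]] Hr]].
    exists c; split; auto; lra.
  - intros c Hc. destruct (Glb_Rbar_lt_witness _ _ (HC c Hc)) as [r [[b [Hb ->]] Hr]].
    exists b; split; auto; lra.
Qed.

(** Upper estimate: the nonempty subsets of an (n,eps)-spanning set [G] form
    an (n,eps)-spanning family of [K(X)] with [2 ^ |G| - 1] members; a set
    [B] is approximated by the points of [G] that are eps-close to [B]. *)
Lemma K_spanning_of_spanning n eps G : 0 < eps -> spanning d f n eps G ->
  exists GK, K_spanning d f (inK d) n eps GK /\ S (length GK) = (2 ^ length G)%nat.
Proof.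
  intros He HG. exists (map (fun T x => In x T) (nonempty_sublists G)). split.
  2: { rewrite length_map; apply nonempty_sublists_length. }
  split.
  - intros C HC. apply in_map_iff in HC. destruct HC as [T [<- HT]].
    apply list_inK. eapply nonempty_sublists_nonempty; eauto.
  - intros B [[b0 Hb0] _].
    destruct (nonempty_sublists_select G (fun g => exists b, B b /\ dn d f n b g <= eps))
      as [T [HT HTe]].
    { destruct (HG b0) as [y [Hy Hdy]]. exists y; split; eauto. }
    exists (fun x => In x T). split; [apply (in_map (fun T (x : X) => In x T)); auto|].
    apply Hn_le_of_partners; auto.
    + intros b Hb. destruct (HG b) as [y [Hy Hdy]]. exists y; split; auto. apply HTe; eauto.
    + intros c Hc. apply HTe in Hc. destruct Hc as [_ [b [Hb Hdb]]].
      exists b; split; auto. rewrite dn_sym; auto.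
Qed.

(** Two subsets [T], [T'] of a (n,3eps)-separated set that are both within
    [H^n]-distance [eps] of a common [C] are equal: a point of [T] has, via
    [C], a partner in [T'] at [d_n]-distance [< 3eps], which must be itself. *)
Lemma separated_subsets_share_center n eps E T T' (C : X -> Prop) : 0 < eps ->
  separated n (3 * eps) E -> (forall x, In x T -> In x E) -> (forall x, In x T' -> In x E) ->
  Rbar_le (Hn d f n (fun x => In x T) C) eps ->
  Rbar_le (Hn d f n (fun x => In x T') C) eps ->
  forall x, In x T -> In x T'.
Proof.
  intros He [_ Hsep] HT HT' H1 H2 x Hx. apply NNPP; intro Hx'.
  destruct (proj1 (partners_of_Hn_le _ _ _ eps (5/4 * eps) H1 ltac:(lra)) x Hx)
    as [c [Hc Hxc]].
  destruct (proj2 (partners_of_Hn_le _ _ _ eps (5/4 * eps) H2 ltac:(lra)) c Hc)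
    as [t [Ht Hct]].
  assert (Hne : x <> t) by (intros ->; auto).
  pose proof (Hsep x t (HT _ Hx) (HT' _ Ht) Hne). pose proof (dn_triangle n x c t). lra.
Qed.

(** Lower estimate: an (n,eps)-spanning family of [K(X)] needs a distinct
    center for each nonempty subset of an (n,3eps)-separated set [E]. *)
Lemma K_spanning_length_lower n eps E GK : 0 < eps ->
  separated n (3 * eps) E -> K_spanning d f (inK d) n eps GK ->
  (2 ^ length E <= S (length GK))%nat.
Proof.
  intros He HE [_ HG]. rewrite <- nonempty_sublists_length. apply le_n_S.
  apply (length_le_of_injective_relation
           (fun T C => Rbar_le (Hn d f n (fun x => In x T) C) eps)).
  - apply nonempty_sublists_NoDup, HE.
  - intros T HT. apply HG, list_inK. eapply nonempty_sublists_nonempty; eauto.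
  - intros T T' C HT HT' H1 H2. apply (nonempty_sublists_ext E (proj1 HE)); auto.
    pose proof (nonempty_sublists_incl _ _ HT). pose proof (nonempty_sublists_incl _ _ HT').
    intros x; split; apply (separated_subsets_share_center n eps E _ _ C); auto.
Qed.

(** ** Spanning and separated sets under continuity and compactness *)

Section Dynamics.
Hypothesis Hf : m_continuous d f.

Lemma iter_continuous m y eta : 0 < eta ->
  exists r, 0 < r /\ forall z, d y z < r -> d (Nat.iter m f y) (Nat.iter m f z) < eta.
Proof.
  revert eta; induction m; intros eta He; simpl.
  - exists eta; split; auto.
  - destruct (Hf (Nat.iter m f y) eta He) as [del [Hdel H]].
    destruct (IHm del Hdel) as [r [Hr H']]. exists r; split; auto.
Qed.

Lemma dn_continuous n y eta : 0 < eta ->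
  exists r, 0 < r /\ forall z, d y z < r -> dn d f n y z < eta.
Proof.
  intros He; induction n as [|n [r1 [Hr1 H1]]]; simpl.
  - exists 1; split; [lra|auto].
  - destruct (iter_continuous n y eta He) as [r2 [Hr2 H2]].
    exists (Rmin r1 r2); split; [apply Rmin_pos; auto|].
    intros z Hz. apply Rmax_lub_lt.
    + apply H1. eapply Rlt_le_trans; [apply Hz|apply Rmin_l].
    + apply H2. eapply Rlt_le_trans; [apply Hz|apply Rmin_r].
Qed.

Hypothesis Hcpt : m_compact d.

(** Finite spanning sets exist at every positive scale: cover [X] by the
    open [d_n]-balls. *)
Lemma spanning_exists n eps : 0 < eps -> exists G, spanning d f n eps G.
Proof.
  intros He.
  destruct (Hcpt X (fun x y => dn d f n x y < eps)) as [l Hl].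
  - intros x y Hy. destruct (dn_continuous n y (eps - dn d f n x y)) as [r [Hr H]]; [lra|].
    exists r; split; auto. intros z Hz. specialize (H z Hz).
    pose proof (dn_triangle n x y z). lra.
  - intros x; exists x. rewrite dn_self; auto.
  - exists l. intros x. destruct (Hl x) as [i [Hi H]]. exists i; split; auto.
    rewrite dn_sym; lra.
Qed.

(** A maximal (n,del)-separated set exists (separated sets are bounded in
    size by a spanning set) and, by maximality, is (n,del)-spanning. *)
Lemma maximal_separated_spanning n del : 0 < del ->
  exists E, separated n del E /\ spanning d f n del E.
Proof.
  intros Hdel. destruct (spanning_exists n (del / 3)) as [G HG]; [lra|].
  destruct (last_witness (fun k => exists E, separated n del E /\ length E = k) (length G))
    as [k [[E [HE Hk]] Hmax]].
  - exists nil; split; auto. split; [constructor|simpl; tauto].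
  - intros k [E [HE <-]]. eapply separated_length_le; eauto.
  - exists E; split; auto. intros x. apply NNPP; intro Hn.
    assert (Hfar : forall y, In y E -> del < dn d f n x y).
    { intros y Hy. apply Rnot_le_lt; intro; apply Hn; eauto. }
    apply Hmax. exists (x :: E); split; [|simpl; lia].
    destruct HE as [HN Hsep]. split.
    + constructor; auto. intro Hx. specialize (Hfar x Hx). rewrite dn_self in Hfar. lra.
    + intros a b [<-|Ha] [<-|Hb] Hne.
      * tauto.
      * apply Rlt_le, Hfar; auto.
      * rewrite dn_sym; apply Rlt_le, Hfar; auto.
      * apply Hsep; auto.
Qed.

(** Itineraries: a list of at most [|G1| ^ k] sequences such that every orbit
    segment of length [k] is shadowed within [eps/2], stepwise, by one of
    them; each step refines by the [M] points of a (1,eps/2)-spanning set. *)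
Lemma itinerary_cover eps G1 : spanning d f 1 (eps / 2) G1 -> forall k,
  exists W : list (nat -> X), (length W <= length G1 ^ k)%nat /\
    forall x, exists w, In w W /\
      forall i, (i < k)%nat -> d (Nat.iter i f x) (w i) <= eps / 2.
Proof.
  intros HG1. induction k as [|k [W [HW Hx]]].
  - destruct (classic (exists x : X, True)) as [[x0 _]|Hempty].
    + exists ((fun _ => x0) :: nil); split; simpl; [lia|].
      intros x; exists (fun _ => x0); split; auto. intros i Hi; lia.
    + exists nil; split; simpl; [lia|]. intros x; exfalso; eauto.
  - pose (extend := fun (w : nat -> X) g i => if Nat.eqb i k then g else w i).
    exists (flat_map (fun w => map (extend w) G1) W). split.
    + rewrite (flat_map_constant_length (c := length G1)); [|intros; apply length_map].
      simpl. rewrite Nat.mul_comm. apply Nat.mul_le_mono_l; auto.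
    + intros x. destruct (Hx x) as [w [Hw Hr]].
      destruct (HG1 (Nat.iter k f x)) as [g [Hg Hdg]].
      exists (extend w g). split.
      * apply in_flat_map. exists w; split; auto. apply in_map; auto.
      * intros i Hi. unfold extend. destruct (Nat.eqb_spec i k) as [->|Hne].
        -- eapply Rle_trans; [|apply Hdg]. apply (dist_iter_le_dn 1 0); lia.
        -- apply Hr; lia.
Qed.

(** Spanning sets grow at most exponentially: choosing one orbit per
    itinerary gives an (n,eps)-spanning set of size [<= |G1| ^ n]. *)
Lemma spanning_exponential_bound n eps G1 : 0 < eps ->
  spanning d f 1 (eps / 2) G1 ->
  exists Y, (length Y <= length G1 ^ n)%nat /\ spanning d f n eps Y.
Proof.
  intros He HG1.
  destruct (itinerary_cover eps G1 HG1 n) as [W [HWl HWx]].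
  pose (shadows := fun (w : nat -> X) x =>
    forall i, (i < n)%nat -> d (Nat.iter i f x) (w i) <= eps / 2).
  destruct (choose_witnesses shadows W) as [Y [HY HYq]].
  exists Y; split; [lia|]. intros x. destruct (HWx x) as [w [Hw Hr]].
  destruct (HYq w Hw (ex_intro _ x Hr)) as [y [Hy Hry]]. exists y; split; auto.
  apply dn_le_of_iter; [lra|]. intros i Hi. specialize (Hr i Hi); specialize (Hry i Hi).
  pose proof (dist_triangle (Nat.iter i f x) (w i) (Nat.iter i f y)).
  rewrite (dist_sym (w i)) in H. lra.
Qed.

(** ** The minimal cardinalities [N n e] and [NK n e] *)

(** The least size of an (n,eps)-spanning set of [X] (junk for [eps <= 0]). *)
Definition span_card (n : nat) (eps : R) : nat :=
  epsilon (inhabits 0%nat) (fun m => 0 < eps -> is_min_span_card d f n eps m).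

Definition K_span_card (n : nat) (eps : R) : nat :=
  epsilon (inhabits 0%nat) (fun m => 0 < eps -> is_min_K_card d f (inK d) n eps m).

Lemma span_card_spec n eps : 0 < eps -> is_min_span_card d f n eps (span_card n eps).
Proof.
  intros He. unfold span_card.
  apply (epsilon_spec (inhabits 0%nat) (fun m => 0 < eps -> is_min_span_card d f n eps m)); auto.
  destruct (least_witness (fun m => exists G, length G = m /\ spanning d f n eps G))
    as [m [Hm Hleast]].
  { destruct (spanning_exists n eps He) as [G HG]; eauto. }
  exists m; intros _. split; auto. intros G HG. apply Hleast; eauto.
Qed.

Lemma K_span_card_spec n eps : 0 < eps ->
  is_min_K_card d f (inK d) n eps (K_span_card n eps).
Proof.
  intros He. unfold K_span_card.
  apply (epsilon_spec (inhabits 0%nat)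
           (fun m => 0 < eps -> is_min_K_card d f (inK d) n eps m)); auto.
  destruct (least_witness (fun m => exists G, length G = m /\ K_spanning d f (inK d) n eps G))
    as [m [Hm Hleast]].
  { destruct (spanning_exists n eps He) as [G HG].
    destruct (K_spanning_of_spanning n eps G He HG) as [GK [HGK _]]; eauto. }
  exists m; intros _. split; auto. intros G HG. apply Hleast; eauto.
Qed.

Lemma span_card_antitone n e1 e2 : 0 < e1 -> e1 <= e2 ->
  (span_card n e2 <= span_card n e1)%nat.
Proof.
  intros H1 H2. destruct (span_card_spec n e1 H1) as [[G [HG HGs]] _].
  rewrite <- HG. apply (span_card_spec n e2); [lra|].
  intros x; destruct (HGs x) as [y [Hy Hxy]]; exists y; split; auto; lra.
Qed.

Lemma K_span_card_upper n eps : 0 < eps ->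
  (S (K_span_card n eps) <= 2 ^ span_card n eps)%nat.
Proof.
  intros He. destruct (span_card_spec n eps He) as [[G [HG HGs]] _].
  destruct (K_spanning_of_spanning n eps G He HGs) as [GK [HK HL]].
  rewrite <- HG, <- HL. apply le_n_S. apply (K_span_card_spec n eps He); auto.
Qed.

Lemma K_span_card_lower n eps : 0 < eps ->
  (2 ^ span_card n (3 * eps) <= S (K_span_card n eps))%nat.
Proof.
  intros He. destruct (maximal_separated_spanning n (3 * eps)) as [E [HE HEs]]; [lra|].
  destruct (K_span_card_spec n eps He) as [[GK [HGK HKs]] _].
  eapply Nat.le_trans.
  - apply Nat.pow_le_mono_r; [lia|]. apply (span_card_spec n (3 * eps)); [lra|apply HEs].
  - rewrite <- HGK. apply (K_spanning_length_lower n eps); auto.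
Qed.

Lemma span_card_exponential eps : 0 < eps ->
  exists M, forall n, (span_card n eps <= M ^ n)%nat.
Proof.
  intros He. destruct (spanning_exists 1 (eps / 2)) as [G1 HG1]; [lra|].
  exists (length G1). intros n.
  destruct (spanning_exponential_bound n eps G1 He HG1) as [Y [HY HYs]].
  eapply Nat.le_trans; [|apply HY]. apply (span_card_spec n eps He); auto.
Qed.

End Dynamics.
End BowenMetric.

(** ** Logarithm estimates *)

(** Stdlib's [ln] is [0] on nonpositive arguments, matching [log 0 = 0]. *)
Lemma ln_0 : ln 0 = 0.
Proof. unfold ln. destruct (Rlt_dec _ _) as [h|h]; [exfalso; lra|auto]. Qed.

Lemma ln_INR_le1 k : (k <= 1)%nat -> ln (INR k) = 0.
Proof.
  intros Hk. destruct k as [|[|k]]; [rewrite INR_0; apply ln_0|rewrite INR_1; apply ln_1|lia].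
Qed.

Lemma ln_INR_nonneg k : 0 <= ln (INR k).
Proof.
  destruct k; [rewrite INR_0, ln_0; lra|].
  rewrite <- ln_1. apply ln_le; [lra|]. rewrite S_INR; pose proof (pos_INR k); lra.
Qed.

Lemma ln_INR_le k k' : (k <= k')%nat -> ln (INR k) <= ln (INR k').
Proof.
  intros H. destruct k; [rewrite INR_0, ln_0; apply ln_INR_nonneg|].
  apply ln_le; [apply lt_0_INR; lia|apply le_INR; auto].
Qed.

Lemma ln_2_pos : 0 < ln 2.
Proof. pose proof ln_lt_2; lra. Qed.

Lemma ln_2_lt_1 : ln 2 < 1.
Proof.
  rewrite <- (ln_exp 1). apply ln_increasing; [lra|]. pose proof (exp_ineq1 1 ltac:(lra)); lra.
Qed.

Lemma ln_2_le_ln_INR k : (2 <= k)%nat -> ln 2 <= ln (INR k).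
Proof.
  intros Hk. apply ln_le; [lra|]. replace 2 with (INR 2) by (simpl; lra). apply le_INR; auto.
Qed.

Definition lnln_floor : R := ln (ln 2 / 2).

Lemma lnln_floor_neg : lnln_floor < 0.
Proof.
  unfold lnln_floor. rewrite <- ln_1. pose proof ln_2_pos. pose proof ln_2_lt_1.
  apply ln_increasing; lra.
Qed.

Lemma lnln_INR_ge_floor k : lnln_floor <= ln (ln (INR k)).
Proof.
  pose proof lnln_floor_neg. pose proof ln_2_pos.
  destruct (Compare_dec.le_lt_dec k 1) as [Hk|Hk].
  - rewrite ln_INR_le1, ln_0 by auto; lra.
  - pose proof (ln_2_le_ln_INR k Hk). unfold lnln_floor. apply ln_le; lra.
Qed.

Lemma lnln_le_of_lt_pow2 k m : (S k <= 2 ^ m)%nat -> ln (ln (INR k)) <= ln (INR m).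
Proof.
  intros H. destruct (Compare_dec.le_lt_dec k 1) as [Hk|Hk].
  - rewrite ln_INR_le1, ln_0 by auto; apply ln_INR_nonneg.
  - pose proof (ln_2_le_ln_INR k Hk). pose proof ln_2_pos. pose proof ln_2_lt_1.
    apply ln_le; [lra|].
    assert (Hlt : INR k < 2 ^ m) by (rewrite <- (pow_INR 2); apply lt_INR; lia).
    assert (Hln : ln (INR k) < ln (2 ^ m)) by (apply ln_increasing; auto; apply lt_0_INR; lia).
    rewrite ln_pow in Hln by lra. pose proof (pos_INR m). nra.
Qed.

Lemma lnln_ge_of_pow2_le k s : (2 ^ s <= S k)%nat -> ln (INR s) + lnln_floor <= ln (ln (INR k)).
Proof.
  intros H. destruct (Compare_dec.le_lt_dec s 1) as [Hs|Hs].
  - rewrite ln_INR_le1 by auto. pose proof (lnln_INR_ge_floor k); lra.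
  - destruct s as [|s']; [lia|].
    assert (Hp : (1 <= 2 ^ s')%nat) by (apply Nat.le_succ_l, Nat.neq_0_lt_0, Nat.pow_nonzero; lia).
    rewrite Nat.pow_succ_r' in H.
    assert (HKr : 2 ^ s' <= INR k) by (rewrite <- (pow_INR 2); apply le_INR; lia).
    pose proof ln_2_pos.
    assert (H1 : INR s' * ln 2 <= ln (INR k)).
    { rewrite <- ln_pow by lra. apply ln_le; auto. apply pow_lt; lra. }
    assert (Hs' : 1 <= INR s') by (replace 1 with (INR 1) by auto; apply le_INR; lia).
    assert (Hhalf : INR (S s') / 2 <= INR s') by (rewrite S_INR; lra).
    assert (HSpos : 0 < INR (S s')) by (apply lt_0_INR; lia).
    unfold lnln_floor. rewrite <- ln_mult by lra.
    apply ln_le; [apply Rmult_lt_0_compat; lra|nra].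
Qed.

Lemma Rdiv_INR_le x y n : x <= y -> x / INR n <= y / INR n.
Proof.
  intros H. unfold Rdiv. apply Rmult_le_compat_r; auto.
  destruct n; [rewrite INR_0, Rinv_0; lra|].
  apply Rlt_le, Rinv_0_lt_compat, lt_0_INR; lia.
Qed.

(** ** Upper limits *)

Lemma LimSup_seq_correct u : is_LimSup_seq u (LimSup_seq u).
Proof. unfold LimSup_seq. destruct (ex_LimSup_seq u); simpl; auto. Qed.

Lemma LimSup_seq_ge (u : nat -> R) c :
  (forall n, (1 <= n)%nat -> c <= u n) -> Rbar_le c (LimSup_seq u).
Proof. intros H. rewrite <- (LimSup_seq_const c). apply LimSup_le. exists 1%nat; auto. Qed.

Lemma LimSup_seq_le (u : nat -> R) c :
  (forall n, (1 <= n)%nat -> u n <= c) -> Rbar_le (LimSup_seq u) c.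
Proof. intros H. rewrite <- (LimSup_seq_const c). apply LimSup_le. exists 1%nat; auto. Qed.

Lemma Rbar_finite_between (x : Rbar) (lo hi : R) :
  Rbar_le lo x -> Rbar_le x hi -> x = Finite (real x).
Proof. destruct x; simpl; intros; try reflexivity; tauto. Qed.

Lemma is_LimSup_le_of_eventually_le_plus (u v : nat -> R) (lu lv : R) :
  is_LimSup_seq u lu -> is_LimSup_seq v lv ->
  (forall eta, 0 < eta -> eventually (fun n => u n <= v n + eta)) -> lu <= lv.
Proof.
  intros Hu Hv H. apply Rnot_lt_le; intro Hlt.
  set (eta := mkposreal ((lu - lv) / 3) ltac:(lra)).
  destruct (Hv eta) as [_ [N1 H1]]. destruct (H eta (cond_pos eta)) as [N2 H2].
  destruct (proj1 (Hu eta) (N1 + N2)%nat) as [n [Hn H3]].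
  specialize (H1 n ltac:(lia)). specialize (H2 n ltac:(lia)). simpl in *. lra.
Qed.

(** The filter of [Rbar_locally L] seen on [Rbar]-valued functions with real
    values, as used in the definitions of [is_htop] and [is_entropy_order]. *)
Definition Rbar_nbhd (L : Rbar) : (Rbar -> Prop) -> Prop :=
  fun P => Rbar_locally L (fun x : R => P (Finite x)).

Lemma Lub_Rbar_exceeds (E : R -> Prop) (M : R) :
  Rbar_lt M (Lub_Rbar E) -> exists x, E x /\ M < x.
Proof.
  intros HM. apply NNPP; intro Hn. apply (Rbar_lt_not_le _ _ HM).
  apply (proj2 (Lub_Rbar_correct E)). intros x Hx. simpl.
  apply Rnot_lt_le; intro; apply Hn; eauto.
Qed.

(** ** The squeeze as the scale tends to [0]

    Abstractly, let [N n e] and [NK n e] be counts such that [N] is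
    antitone in [e], grows at most exponentially in [n], and
    [2 ^ N n (3e) <= 1 + NK n e <= 2 ^ N n e].  Then the exponential growth
    rate of [N] and the second order growth rate of [NK] have the same limit
    as [e -> 0+]. *)

Section ScaleLimits.
Variables (N NK : nat -> R -> nat).
Hypothesis N_antitone : forall n e1 e2, 0 < e1 -> e1 <= e2 -> (N n e2 <= N n e1)%nat.
Hypothesis NK_upper : forall n e, 0 < e -> (S (NK n e) <= 2 ^ N n e)%nat.
Hypothesis NK_lower : forall n e, 0 < e -> (2 ^ N n (3 * e) <= S (NK n e))%nat.
Hypothesis N_exponential : forall e, 0 < e -> exists M, forall n, (N n e <= M ^ n)%nat.

Definition growth_rate (e : R) (n : nat) : R := ln (INR (N n e)) / INR n.
Definition order_rate (e : R) (n : nat) : R := ln (ln (INR (NK n e))) / INR n.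

(** The real values of the upper limits at a fixed scale (shown finite below). *)
Definition growth_at (e : R) : R := real (LimSup_seq (growth_rate e)).
Definition order_at (e : R) : R := real (LimSup_seq (order_rate e)).

Lemma growth_limsup_finite e : 0 < e ->
  LimSup_seq (growth_rate e) = Finite (growth_at e) /\ 0 <= growth_at e.
Proof.
  intros He. destruct (N_exponential e He) as [M HM].
  assert (H0 : Rbar_le 0 (LimSup_seq (growth_rate e))).
  { apply LimSup_seq_ge. intros n Hn. unfold growth_rate.
    apply Rmult_le_pos; [apply ln_INR_nonneg|].
    apply Rlt_le, Rinv_0_lt_compat, lt_0_INR; lia. }
  assert (H1 : Rbar_le (LimSup_seq (growth_rate e)) (ln (INR M))).
  { apply LimSup_seq_le. intros n Hn. unfold growth_rate.
    assert (Hn' : 0 < INR n) by (apply lt_0_INR; lia).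
    apply Rmult_le_reg_r with (INR n); auto.
    unfold Rdiv; rewrite Rmult_assoc, Rinv_l, Rmult_1_r by lra.
    specialize (HM n). destruct (N n e) eqn:EN.
    - rewrite INR_0, ln_0. pose proof (ln_INR_nonneg M); nra.
    - assert (HMpos : (0 < M)%nat) by (destruct M; [rewrite Nat.pow_0_l in HM by lia|]; lia).
      rewrite Rmult_comm, <- ln_pow by (apply lt_0_INR; auto). rewrite <- pow_INR.
      apply ln_INR_le; auto. }
  pose proof (Rbar_finite_between _ _ _ H0 H1) as E. split; auto.
  rewrite E in H0; simpl in H0; auto.
Qed.

Lemma growth_at_antitone e1 e2 : 0 < e1 -> e1 <= e2 -> growth_at e2 <= growth_at e1.
Proof.
  intros H1 H2.
  assert (Hle : Rbar_le (LimSup_seq (growth_rate e2)) (LimSup_seq (growth_rate e1))).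
  { apply LimSup_le. exists 0%nat. intros n _. unfold growth_rate.
    apply Rdiv_INR_le, ln_INR_le; auto. }
  rewrite (proj1 (growth_limsup_finite e1 H1)), (proj1 (growth_limsup_finite e2 ltac:(lra))) in Hle.
  exact Hle.
Qed.

Lemma order_limsup_le_growth e : 0 < e ->
  Rbar_le (LimSup_seq (order_rate e)) (LimSup_seq (growth_rate e)).
Proof.
  intros He. apply LimSup_le. exists 0%nat; intros n _. unfold order_rate, growth_rate.
  apply Rdiv_INR_le, lnln_le_of_lt_pow2; auto.
Qed.

(** The order rate is bounded below by [lnln_floor] and above by the growth
    rate, hence finite. *)
Lemma order_limsup_finite e : 0 < e -> LimSup_seq (order_rate e) = Finite (order_at e).
Proof.
  intros He. apply (Rbar_finite_between _ lnln_floor (growth_at e)).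
  - apply LimSup_seq_ge. intros n Hn. unfold order_rate.
    assert (Hn' : 1 <= INR n) by (replace 1 with (INR 1) by auto; apply le_INR; auto).
    pose proof (lnln_INR_ge_floor (NK n e)). pose proof lnln_floor_neg.
    apply Rmult_le_reg_r with (INR n); [lra|].
    unfold Rdiv; rewrite Rmult_assoc, Rinv_l by lra. nra.
  - pose proof (order_limsup_le_growth e He) as Hle.
    rewrite (proj1 (growth_limsup_finite e He)) in Hle. exact Hle.
Qed.

Lemma order_at_le_growth_at e : 0 < e -> order_at e <= growth_at e.
Proof.
  intros He. pose proof (order_limsup_le_growth e He) as Hle.
  rewrite (order_limsup_finite e He), (proj1 (growth_limsup_finite e He)) in Hle. exact Hle.
Qed.

(** The lower count estimate: [ln N n (3e) / n <= ln ln NK n e / n + O(1/n)]. *)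
Lemma growth_at_triple_le_order_at e : 0 < e -> growth_at (3 * e) <= order_at e.
Proof.
  intros He. pose proof (LimSup_seq_correct (growth_rate (3 * e))) as Hu.
  pose proof (LimSup_seq_correct (order_rate e)) as Hv.
  rewrite (proj1 (growth_limsup_finite (3 * e) ltac:(lra))) in Hu.
  rewrite (order_limsup_finite e He) in Hv.
  apply (is_LimSup_le_of_eventually_le_plus _ _ _ _ Hu Hv). intros eta Heta.
  pose proof lnln_floor_neg.
  destruct (INR_unbounded (- lnln_floor / eta)) as [N0 HN0].
  exists (S N0). intros n Hn. unfold growth_rate, order_rate.
  assert (Hn' : INR N0 < INR n) by (apply lt_INR; lia).
  assert (Hnpos : 0 < INR n) by (pose proof (pos_INR N0); lra).
  pose proof (lnln_ge_of_pow2_le _ _ (NK_lower n e He)).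
  apply Rmult_le_reg_r with (INR n); auto.
  rewrite Rmult_plus_distr_r. unfold Rdiv; rewrite !Rmult_assoc, !Rinv_l, !Rmult_1_r by lra.
  assert (Herr : - lnln_floor <= eta * INR n).
  { replace (- lnln_floor) with ((- lnln_floor / eta) * eta) by (field; lra). nra. }
  lra.
Qed.

(** The common limit: the supremum of the growth rates over all scales. *)
Definition scale_limit : Rbar := Lub_Rbar (fun r => exists e, 0 < e /\ r = growth_at e).

(** Any [g] squeezed as [growth_at (3e) <= g e <= growth_at e] tends to
    [scale_limit] as [e -> 0+], since [growth_at] is antitone. *)
Lemma squeeze_to_scale_limit (g : R -> R) :
  (forall e, 0 < e -> growth_at (3 * e) <= g e <= growth_at e) ->
  filterlim g (at_right 0) (Rbar_locally scale_limit).
Proof.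
  intros Hg P HP. unfold filtermap.
  pose proof (proj1 (Lub_Rbar_correct (fun r => exists e, 0 < e /\ r = growth_at e))) as Hub.
  fold scale_limit in Hub.
  assert (Hexceed : forall M : R, Rbar_lt M scale_limit -> exists e0, 0 < e0 /\ M < growth_at e0).
  { intros M HM. destruct (Lub_Rbar_exceeds _ M HM) as [x [[e0 [He0 ->]] Hx]]; eauto. }
  assert (Hnear : forall e0, 0 < e0 -> (forall y, 0 < y -> y < e0 / 3 -> P (g y)) ->
                   at_right 0 (fun x => P (g x))).
  { intros e0 He0 H. exists (mkposreal (e0 / 3) ltac:(lra)). intros y Hy Hpos.
    apply H; auto. change (Rabs (y - 0) < e0 / 3) in Hy.
    rewrite Rminus_0_r, Rabs_pos_eq in Hy by lra. auto. }
  destruct scale_limit as [l| |] eqn:EL.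
  - destruct HP as [eta Heta].
    destruct (Hexceed (l - eta)) as [e0 [He0 Hl]]; [simpl; destruct eta; simpl; lra|].
    apply (Hnear e0 He0). intros y Hy1 Hy2. apply Heta. change (Rabs (g y - l) < eta).
    destruct (Hg y Hy1). pose proof (growth_at_antitone (3 * y) e0 ltac:(lra) ltac:(lra)).
    assert (growth_at y <= l) by (apply (Hub (growth_at y)); eauto).
    apply Rabs_def1; lra.
  - destruct HP as [M HM]. destruct (Hexceed M) as [e0 [He0 HM0]]; [simpl; auto|].
    apply (Hnear e0 He0). intros y Hy1 Hy2. apply HM.
    destruct (Hg y Hy1). pose proof (growth_at_antitone (3 * y) e0 ltac:(lra) ltac:(lra)). lra.
  - exfalso. apply (Hub (growth_at 1)). exists 1; split; auto; lra.
Qed.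

Lemma Rbar_limit_of_finite_values (G : R -> Rbar) (g : R -> R) :
  (forall e, 0 < e -> G e = Finite (g e)) ->
  filterlim g (at_right 0) (Rbar_locally scale_limit) ->
  filterlim G (at_right 0) (Rbar_nbhd scale_limit).
Proof.
  intros HG Hg P HP. destruct (Hg _ HP) as [del H].
  exists del. intros y Hy Hpos. unfold filtermap. rewrite HG by exact Hpos. apply H; auto.
Qed.

Lemma growth_limsup_tendsto :
  filterlim (fun e => LimSup_seq (growth_rate e)) (at_right 0) (Rbar_nbhd scale_limit).
Proof.
  apply (Rbar_limit_of_finite_values _ growth_at).
  - intros e He; apply growth_limsup_finite; auto.
  - apply squeeze_to_scale_limit. intros e He.
    split; [apply growth_at_antitone; lra|apply Rle_refl].
Qed.

Lemma order_limsup_tendsto :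
  filterlim (fun e => LimSup_seq (order_rate e)) (at_right 0) (Rbar_nbhd scale_limit).
Proof.
  apply (Rbar_limit_of_finite_values _ order_at).
  - exact order_limsup_finite.
  - apply squeeze_to_scale_limit. intros e He.
    split; [apply growth_at_triple_le_order_at|apply order_at_le_growth_at]; auto.
Qed.

End ScaleLimits.

Theorem theorem1p3 (X : Type) (d : X -> X -> R) (f : X -> X)
  (Hd : is_metric d) (Hcpt : m_compact d) (Hf : m_continuous d f) :
  exists L : Rbar, is_entropy_order_K d f L /\ is_htop d f L.
Proof.
  pose proof (span_card_antitone d f Hd Hf Hcpt) as Hanti.
  pose proof (K_span_card_upper d f Hd Hf Hcpt) as Hupper.
  pose proof (K_span_card_lower d f Hd Hf Hcpt) as Hlower.
  pose proof (span_card_exponential d f Hd Hf Hcpt) as Hexp.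
  exists (scale_limit (span_card d f)). split.
  - exists (K_span_card d f). split.
    + exact (K_span_card_spec d f Hd Hf Hcpt).
    + exact (order_limsup_tendsto _ _ Hanti Hupper Hlower Hexp).
  - exists (span_card d f). split.
    + exact (span_card_spec d f Hd Hf Hcpt).
    + exact (growth_limsup_tendsto _ Hanti Hexp).
Qed.
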